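(* Let $T_R:\mathbb{Z}\to\mathbb{Z}$ be defined by $T_R(n)=3n/4$ if $n\equiv 0\pmod 4$, $T_R(n)=(n-2)/4$ if $n\equiv 2\pmod 4$, and $T_R(n)=(3n+1)/2$ if $n$ is odd. Define $T_R^*:\mathbb{Z}\to\mathbb{Z}$ by $T_R^*(n)=T_R(n)$ if $n\equiv 1\pmod 2$ or $n\equiv 0\pmod 4$; $T_R^*(n)=T_R^2(n)$ if $n\equiv 6\pmod 8$ or $n\equiv 2\pmod{16}$; and $T_R^*(n)=T_R^3(n)$ if $n\equiv 26\pmod{32}$, $n\equiv 10\pmod{64}$ or $n\equiv 42\pmod{64}$. Then for every integer $j$: (i) (class $0 \bmod 3$) $T_R^*(12j)=9j$, $T_R^*(48j+18)=9j+3$, $T_R^*(192j+138)=9j+6$, $T_R^*(192j+42)=3j$, $T_R^*(96j+90)=9j+8$, $T_R^*(24j+6)=9j+2$, $T_R^*(6j+3)=9j+5$; (ii) (class $1 \bmod 3$) $T_R^*(12j+4)=9j+3$, $T_R^*(48j+34)=9j+6$, $T_R^*(192j+10)=9j$, $T_R^*(192j+106)=3j+1$, $T_R^*(96j+58)=9j+5$, $T_R^*(24j+22)=9j+8$, $T_R^*(6j+1)=9j+2$; (iii) (class $2 \bmod 3$) $T_R^*(12j+8)=9j+6$, $T_R^*(48j+2)=9j$, $T_R^*(192j+74)=9j+3$, $T_R^*(192j+170)=3j+2$, $T_R^*(96j+26)=9j+2$, $T_R^*(24j+14)=9j+5$, $T_R^*(6j+5)=9j+8$. Here, for each $r\in\{0,1,2\}$,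 the seven residue classes listed in item (i), (ii), (iii) respectively partition the set of integers congruent to $r \pmod 3$. In particular $T_R^*$ maps the integers congruent to $0$ or $2 \pmod 3$ into the integers congruent to $0$ or $2\pmod 3$.
   Context: $T_R^k$ denotes the $k$-fold iterate of $T_R$. *)

From Stdlib Require Import ZArith List Bool.
Open Scope Z_scope.
Open Scope bool_scope.

(* T_R : Z -> Z.  In each case the division is exact, so Z.div is exact division. *)
Definition TR (n : Z) : Z :=
  if n mod 4 =? 0 then 3 * n / 4
  else if n mod 4 =? 2 then (n - 2) / 4
  else (3 * n + 1) / 2.

Definition TRiter (k : nat) (n : Z) : Z := Nat.iter k TR n.

(* T_R^* ; the case split below is exhaustive over Z (the final
   fallback branch is never reached). *)
Definition TRstar (n : Z) : Z :=
  if (n mod 2 =? 1) || (n mod 4 =? 0) then TRiter 1 n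
  else if (n mod 8 =? 6) || (n mod 16 =? 2) then TRiter 2 n
  else if (n mod 32 =? 26) || (n mod 64 =? 10) || (n mod 64 =? 42) then TRiter 3 n
  else n.

(* residue classes a (mod m), written as pairs (m, a) *)
Definition in_class (n : Z) (c : Z * Z) : bool := n mod (fst c) =? snd c.

Definition classes0 : list (Z * Z) :=
  (12,0) :: (48,18) :: (192,138) :: (192,42) :: (96,90) :: (24,6) :: (6,3) :: nil.
Definition classes1 : list (Z * Z) :=
  (12,4) :: (48,34) :: (192,10) :: (192,106) :: (96,58) :: (24,22) :: (6,1) :: nil.
Definition classes2 : list (Z * Z) :=
  (12,8) :: (48,2) :: (192,74) :: (192,170) :: (96,26) :: (24,14) :: (6,5) :: nil.

Definition partitions_mod3 (cls : list (Z * Z)) (r : Z) : Prop :=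
  forall n : Z,
    length (filter (in_class n) cls) = (if n mod 3 =? r then 1%nat else 0%nat).

(* Each identity follows an arithmetic progression m j + a through at most
   three steps of T_R; the modulus m is large enough to fix, at every step,
   which branch of T_R (and of T_R^* ) applies.  Membership in every listed
   class depends only on n mod 192, so the partition claims reduce to a finite
   check over the residues mod 192.  Finally, the images 9j + c (c in
   {0, 2, 3, 5, 6, 8}), 3j and 3j + 2 of the classes congruent to 0 or 2 mod 3
   are never congruent to 1 mod 3. *)

From Stdlib Require Import ZArith List Lia Bool.
Open Scope Z_scope.

Ltac Zdivmod := Z.div_mod_to_equations; lia.

Ltac case_eqb := repeat match goal with
  | |- context [?a =? ?b] => destruct (Z.eqb_spec a b)
  end; cbn [orb]; try Zdivmod.

Lemma TR_mod4_0 n : n mod 4 = 0 -> TR n = 3 * n / 4.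
Proof. intro Hn. unfold TR. case_eqb; reflexivity. Qed.

Lemma TR_mod4_2 n : n mod 4 = 2 -> TR n = (n - 2) / 4.
Proof. intro Hn. unfold TR. case_eqb; reflexivity. Qed.

Lemma TR_odd n : n mod 2 = 1 -> TR n = (3 * n + 1) / 2.
Proof. intro Hn. unfold TR. case_eqb; reflexivity. Qed.

Lemma TRstar_one_step n : n mod 2 = 1 \/ n mod 4 = 0 -> TRstar n = TR n.
Proof. intro Hn. unfold TRstar. case_eqb; reflexivity. Qed.

Lemma TRstar_two_steps n : n mod 8 = 6 \/ n mod 16 = 2 -> TRstar n = TR (TR n).
Proof. intro Hn. unfold TRstar. case_eqb; reflexivity. Qed.

Lemma TRstar_three_steps n :
  n mod 32 = 26 \/ n mod 64 = 10 \/ n mod 64 = 42 -> TRstar n = TR (TR (TR n)).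
Proof. intro Hn. unfold TRstar. case_eqb; reflexivity. Qed.

(* [match] backtracks over the occurrences of [TR], so the innermost one, whose
   argument is an explicit affine expression, is the one rewritten. *)
Ltac TR_step := match goal with
  | |- context [TR ?x] =>
      first [ rewrite (TR_mod4_0 x) by Zdivmod
            | rewrite (TR_mod4_2 x) by Zdivmod
            | rewrite (TR_odd x) by Zdivmod ]
  end.

Ltac compute_TRstar :=
  first [ rewrite TRstar_one_step by Zdivmod
        | rewrite TRstar_two_steps by Zdivmod
        | rewrite TRstar_three_steps by Zdivmod ];
  repeat TR_step; Zdivmod.

Lemma TRstar_on_classes j :
     TRstar (12*j) = 9*j /\ TRstar (48*j+18) = 9*j+3 /\
     TRstar (192*j+138) = 9*j+6 /\ TRstar (192*j+42) = 3*j /\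
     TRstar (96*j+90) = 9*j+8 /\ TRstar (24*j+6) = 9*j+2 /\
     TRstar (6*j+3) = 9*j+5 /\
     TRstar (12*j+4) = 9*j+3 /\ TRstar (48*j+34) = 9*j+6 /\
     TRstar (192*j+10) = 9*j /\ TRstar (192*j+106) = 3*j+1 /\
     TRstar (96*j+58) = 9*j+5 /\ TRstar (24*j+22) = 9*j+8 /\
     TRstar (6*j+1) = 9*j+2 /\
     TRstar (12*j+8) = 9*j+6 /\ TRstar (48*j+2) = 9*j /\
     TRstar (192*j+74) = 9*j+3 /\ TRstar (192*j+170) = 3*j+2 /\
     TRstar (96*j+26) = 9*j+2 /\ TRstar (24*j+14) = 9*j+5 /\
     TRstar (6*j+5) = 9*j+8.
Proof. repeat split; compute_TRstar. Qed.

Definition moduli_divide (N : Z) (cls : list (Z * Z)) : bool :=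
  forallb (fun c => (0 <? fst c) && (N mod fst c =? 0)) cls.

Definition residues (N : Z) : list Z := map Z.of_nat (seq 0 (Z.to_nat N)).

Lemma forallb_residues (N : Z) (P : Z -> bool) :
  0 < N -> forallb P (residues N) = true -> forall n, P (n mod N) = true.
Proof.
  intros HN HP n. rewrite forallb_forall in HP. apply HP.
  assert (Hr : 0 <= n mod N < N) by (apply Z.mod_pos_bound; exact HN).
  replace (n mod N) with (Z.of_nat (Z.to_nat (n mod N))) by lia.
  apply in_map, in_seq. lia.
Qed.

Lemma filter_in_class_mod (N n : Z) (cls : list (Z * Z)) :
  moduli_divide N cls = true ->
  filter (in_class (n mod N)) cls = filter (in_class n) cls.
Proof.
  induction cls as [|[m a] cls IH]; cbn [moduli_divide forallb filter]; [reflexivity|].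
  intros [Hc Hcls]%andb_true_iff.
  apply andb_true_iff in Hc as [Hm%Z.ltb_lt HmN%Z.eqb_eq]; cbn [fst] in Hm, HmN.
  assert (Hin : in_class (n mod N) (m, a) = in_class n (m, a)).
  { unfold in_class; cbn [fst snd].
    rewrite Z.mod_mod_divide; [reflexivity | apply Z.mod_divide; [lia | exact HmN]]. }
  rewrite Hin, IH by exact Hcls. reflexivity.
Qed.

Lemma partitions_mod3_of_residues (N : Z) (cls : list (Z * Z)) (r : Z) :
  0 < N -> (3 | N) -> moduli_divide N cls = true ->
  forallb (fun s => Nat.eqb (length (filter (in_class s) cls))
                            (if s mod 3 =? r then 1%nat else 0%nat))
          (residues N) = true ->
  partitions_mod3 cls r.
Proof.
  intros HN H3N Hcls Hres n.
  apply Nat.eqb_eq.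
  rewrite <- (filter_in_class_mod N n cls Hcls), <- (Z.mod_mod_divide n N 3 H3N).
  exact (forallb_residues N _ HN Hres n).
Qed.

Lemma partitions_mod3_classes0 : partitions_mod3 classes0 0.
Proof.
  apply (partitions_mod3_of_residues 192);
    [lia | exists 64; reflexivity | vm_compute; reflexivity ..].
Qed.

Lemma partitions_mod3_classes1 : partitions_mod3 classes1 1.
Proof.
  apply (partitions_mod3_of_residues 192);
    [lia | exists 64; reflexivity | vm_compute; reflexivity ..].
Qed.

Lemma partitions_mod3_classes2 : partitions_mod3 classes2 2.
Proof.
  apply (partitions_mod3_of_residues 192);
    [lia | exists 64; reflexivity | vm_compute; reflexivity ..].
Qed.

Lemma partitions_mod3_cover (cls : list (Z * Z)) (r n : Z) :
  partitions_mod3 cls r -> n mod 3 = r -> exists c, In c cls /\ in_class n c = true.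
Proof.
  intros Hpart Hn. specialize (Hpart n).
  rewrite Hn, Z.eqb_refl in Hpart.
  destruct (filter (in_class n) cls) as [|c l] eqn:Hf; [discriminate|].
  exists c. apply filter_In. rewrite Hf. left. reflexivity.
Qed.

Lemma in_class_affine (n m a : Z) :
  in_class n (m, a) = true -> m <> 0 -> n = m * (n / m) + a.
Proof.
  unfold in_class; cbn [fst snd]. intros Ha%Z.eqb_eq Hm.
  rewrite <- Ha. apply Z.div_mod. exact Hm.
Qed.

Lemma in_classes0_or_classes2 n :
  n mod 3 <> 1 -> exists c, In c (classes0 ++ classes2) /\ in_class n c = true.
Proof.
  intro Hn.
  assert (Hr : n mod 3 = 0 \/ n mod 3 = 2) by Zdivmod.
  destruct Hr as [Hr|Hr].
  - destruct (partitions_mod3_cover _ _ n partitions_mod3_classes0 Hr) as [c [Hc Hnc]].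
    exists c. split; [apply in_or_app; left | ]; assumption.
  - destruct (partitions_mod3_cover _ _ n partitions_mod3_classes2 Hr) as [c [Hc Hnc]].
    exists c. split; [apply in_or_app; right | ]; assumption.
Qed.

Lemma TRstar_mod3_ne1 n : n mod 3 <> 1 -> TRstar n mod 3 <> 1.
Proof.
  intro Hn.
  destruct (in_classes0_or_classes2 n Hn) as [[m a] [Hc Hnc]].
  destruct (TRstar_on_classes (n / m)) as
    (E1 & E2 & E3 & E4 & E5 & E6 & E7 & _ & _ & _ & _ & _ & _ & _ &
     E8 & E9 & E10 & E11 & E12 & E13 & E14).
  simpl in Hc.
  decompose [or False] Hc;
    match goal with Hma : (_, _) = (m, a) |- _ => injection Hma as <- <- end;
    rewrite (in_class_affine _ _ _ Hnc), ?Z.add_0_r by discriminate;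
    match goal with E : TRstar ?x = _ |- context [TRstar ?x] => rewrite E end;
    Zdivmod.
Qed.

Theorem theorem2 :
  (forall j : Z,
     (* (i) class 0 mod 3 *)
     TRstar (12*j) = 9*j /\ TRstar (48*j+18) = 9*j+3 /\
     TRstar (192*j+138) = 9*j+6 /\ TRstar (192*j+42) = 3*j /\
     TRstar (96*j+90) = 9*j+8 /\ TRstar (24*j+6) = 9*j+2 /\
     TRstar (6*j+3) = 9*j+5 /\
     (* (ii) class 1 mod 3 *)
     TRstar (12*j+4) = 9*j+3 /\ TRstar (48*j+34) = 9*j+6 /\
     TRstar (192*j+10) = 9*j /\ TRstar (192*j+106) = 3*j+1 /\
     TRstar (96*j+58) = 9*j+5 /\ TRstar (24*j+22) = 9*j+8 /\
     TRstar (6*j+1) = 9*j+2 /\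
     (* (iii) class 2 mod 3 *)
     TRstar (12*j+8) = 9*j+6 /\ TRstar (48*j+2) = 9*j /\
     TRstar (192*j+74) = 9*j+3 /\ TRstar (192*j+170) = 3*j+2 /\
     TRstar (96*j+26) = 9*j+2 /\ TRstar (24*j+14) = 9*j+5 /\
     TRstar (6*j+5) = 9*j+8) /\
  partitions_mod3 classes0 0 /\
  partitions_mod3 classes1 1 /\
  partitions_mod3 classes2 2 /\
  (forall n : Z, n mod 3 <> 1 -> TRstar n mod 3 <> 1).
Proof.
  exact (conj TRstar_on_classes
          (conj partitions_mod3_classes0
            (conj partitions_mod3_classes1
              (conj partitions_mod3_classes2 TRstar_mod3_ne1)))).
Qed.
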